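(* Let $m,n,\ell\in\mathbb N$ and $M\in{\rm Mat}_m(\mathbb Z)$. Let $S$ be the set of all vertices of $\Gamma_{M,\,n}$ lying on directed cycles of length dividing $\ell$. Then any $\mathbb Z$-linear combination of vertices from $S$ is a vertex lying on a directed cycle of length dividing $\ell$. Moreover, if $M$ has finite $\mathbb Z_n$-order, then for any ${\bf x}\in S$ and any $s\in\mathbb Z$ with $\gcd(s,n)=1$, the vertices ${\bf x}$ and $s{\bf x}$ lie on directed cycles of equal length.
   Context: $\mathbb N$ is the set of positive integers and $\mathbb Z_n$ the integers modulo $n$. For $M\in{\rm Mat}_m(\mathbb Z)$, the move graph $\Gamma_{M,\,n}$ is the directed graph with vertex set $\mathbb Z_n^m$ and arc set $\{({\bf x},{\bf y}) : {\bf y}^T=M{\bf x}^T \text{ in } \mathbb Z_n^m\}$ (loops allowed). The $\mathbb Z_n$-order of $M$ is the least positive integer $k$ (if it exists) such that $M^k$ acts as the identity on $\mathbb Z_n^m$. A directed cycle is a cycle in the underlying undirected graph such that in the induced directed subgraph on it every vertex has in-degree and out-degree $1$; a loop counts as a directed $1$-cycle and a pair of opposite arcs as a directed $2$-cycle. *)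

From mathcomp Require Import all_boot all_order all_algebra.
Set Implicit Arguments. Unset Strict Implicit. Unset Printing Implicit Defensive.
Import Order.TTheory GRing.Theory Num.Theory.
Local Open Scope ring_scope.

Definition zmodn (n : nat) (hn : (0 < n)%N) (z : int) : 'I_n :=
  Ordinal (ltn_pmod (absz (z %% (n%:Z))%Z) hn).

(* Vertices of the move graph Gamma_{M,n}: elements of Z_n^m. *)
Definition vertex (m n : nat) := {ffun 'I_m -> 'I_n}.

Definition move (m n : nat) (hn : (0 < n)%N) (M : 'M[int]_m) (x : vertex m n)
  : vertex m n :=
  [ffun i => zmodn hn (\sum_(j < m) M i j * ((x j : nat)%:Z))].

Definition arc (m n : nat) (hn : (0 < n)%N) (M : 'M[int]_m) (x y : vertex m n)
  : Prop := y = move hn M x.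

(* x lies on a directed cycle of length k in Gamma_{M,n}: there are k pairwise
   distinct vertices c_0, ..., c_{k-1} with arcs c_i -> c_{i+1 mod k},
   one of which is x (k = 1: a loop; k = 2: a pair of opposite arcs). *)
Definition on_dcycle (m n : nat) (hn : (0 < n)%N) (M : 'M[int]_m)
  (x : vertex m n) (k : nat) : Prop :=
  exists c : 'I_k -> vertex m n,
    [/\ injective c,
        (forall i : 'I_k, arc hn M (c i) (c (ordS i)))
      & exists i : 'I_k, x = c i].

Definition inS (m n : nat) (hn : (0 < n)%N) (M : 'M[int]_m) (l : nat)
  (x : vertex m n) : Prop :=
  exists k : nat, (k %| l)%N /\ on_dcycle hn M x k.

Definition lincomb (m n : nat) (hn : (0 < n)%N) (s : seq (int * vertex m n))
  : vertex m n :=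
  [ffun i => zmodn hn (\sum_(p <- s) p.1 * ((p.2 i : nat)%:Z))].

Definition scalev (m n : nat) (hn : (0 < n)%N) (s : int) (x : vertex m n)
  : vertex m n :=
  [ffun i => zmodn hn (s * ((x i : nat)%:Z))].

Definition finite_order (m n : nat) (hn : (0 < n)%N) (M : 'M[int]_m) : Prop :=
  exists k : nat, (0 < k)%N /\ forall x : vertex m n, iter k (move hn M) x = x.

From mathcomp Require Import all_boot all_order all_algebra zify.
Set Implicit Arguments. Unset Strict Implicit. Unset Printing Implicit Defensive.
Import Order.TTheory GRing.Theory Num.Theory.
Local Open Scope ring_scope.

(** The move map x |-> Mx is Z-linear on Z_n^m, so it commutes with linear
   combinations.  In the functional graph of a map the directed cycles are
   exactly the periodic orbits, and the length of the cycle through x is the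
   exact period of x; hence x lies on a cycle of length dividing l iff
   M^l x = x, a condition preserved by linear combinations.  If s is a unit
   mod n, then x |-> sx is a bijection commuting with M, so x and sx have the
   same exact period. *)

Section ExactPeriod.

Variables (T : eqType) (f : T -> T).

Definition exact_period (x : T) (p : nat) : Prop :=
  [/\ (0 < p)%N, iter p f x = x & forall j, (0 < j < p)%N -> iter j f x != x].

Lemma iter_periodic_mul x k q : iter k f x = x -> iter (q * k) f x = x.
Proof. by move=> fkx; elim: q => //= q IHq; rewrite mulSn iterD IHq. Qed.

Lemma iter_periodic_mod x k j : iter k f x = x -> iter j f x = iter (j %% k) f x.
Proof. by move=> fkx; rewrite {1}(divn_eq j k) addnC iterD iter_periodic_mul. Qed.

Lemma exact_period_exists x l :
  (0 < l)%N -> iter l f x = x -> exists p, exact_period x p.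
Proof.
move=> l_gt0 flx.
have ex_p : exists j, (0 < j)%N && (iter j f x == x).
  by exists l; rewrite l_gt0 flx eqxx.
case: (ex_minnP ex_p) => p /andP[p_gt0 /eqP fpx] p_min.
exists p; split=> // j /andP[j_gt0 j_lt_p]; apply/negP => /eqP fjx.
by have := p_min j; rewrite j_gt0 fjx eqxx leqNgt j_lt_p => /(_ isT).
Qed.

Lemma exact_period_dvdn x p l : exact_period x p -> iter l f x = x -> (p %| l)%N.
Proof.
case=> p_gt0 fpx p_min flx; apply: contraT; rewrite /dvdn -lt0n => r_gt0.
have := p_min (l %% p)%N; rewrite r_gt0 ltn_pmod // -(iter_periodic_mod _ fpx).
by rewrite flx eqxx => /(_ isT).
Qed.

Lemma exact_period_inj_comm (g : T -> T) x p :
  injective g -> (forall y, f (g y) = g (f y)) ->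
  exact_period x p -> exact_period (g x) p.
Proof.
move=> g_inj fg [p_gt0 fpx p_min].
have iter_g j : iter j f (g x) = g (iter j f x).
  by elim: j => //= j ->; rewrite fg.
split=> //; first by rewrite iter_g fpx.
by move=> j /p_min; rewrite iter_g (inj_eq g_inj).
Qed.

End ExactPeriod.

Lemma val_iter_ordS k (i : 'I_k) j : iter j (@ordS k) i = ((i + j) %% k)%N :> nat.
Proof.
elim: j => /= [|j IHj]; first by rewrite addn0 modn_small.
by rewrite IHj -addn1 modnDml addn1 addnS.
Qed.

Section MoveCycles.

Variables (m n : nat) (hn : (0 < n)%N) (M : 'M[int]_m).
Local Notation step := (move hn M).

Lemma on_dcycle_exact_period x k : on_dcycle hn M x k <-> exact_period step x k.
Proof.
split.
- case=> c [c_inj c_arc [i ->]].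
  have iter_c j (i' : 'I_k) : iter j step (c i') = c (iter j (@ordS k) i').
    by elim: j i' => //= j IHj i'; rewrite IHj; apply/esym/c_arc.
  have k_gt0 : (0 < k)%N := leq_ltn_trans (leq0n i) (ltn_ord i).
  split=> // [|j /andP[j_gt0 j_lt_k]]; rewrite iter_c.
    by congr c; apply/val_inj; rewrite /= val_iter_ordS modnDr modn_small.
  rewrite (inj_eq c_inj) -val_eqE /= val_iter_ordS; apply/eqP => ij_eq_i.
  have : (i + j == i + 0 %[mod k]) by rewrite addn0 ij_eq_i modn_small.
  by rewrite eqn_modDl mod0n modn_small // eqn0Ngt j_gt0.
- case=> p_gt0 fpx p_min; exists (fun i : 'I_k => iter i step x); split.
  + have lt_neq (i j : 'I_k) : (i < j)%N -> iter i step x <> iter j step x.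
      move=> lt_ij fij; have j_lt_k := ltn_ord j.
      have /p_min/eqP[] : (0 < k - j + i < k)%N by lia.
      by rewrite iterD fij -iterD subnK ?fpx // ltnW.
    move=> i j fij; apply/val_inj.
    by case: (ltngtP i j) => // [/lt_neq|/lt_neq/(_ (esym fij))].
  + by move=> i; rewrite /arc /= -(iter_periodic_mod _ fpx).
  + by exists (Ordinal p_gt0).
Qed.

Lemma inS_iff_iter l x : (0 < l)%N -> inS hn M l x <-> iter l step x = x.
Proof.
move=> l_gt0; split.
- case=> k [k_dvd_l /on_dcycle_exact_period[_ fkx _]].
  by rewrite (iter_periodic_mod _ fkx) (eqP k_dvd_l).
- move=> flx; have [p px] := exact_period_exists l_gt0 flx.
  exists p; split; first exact: exact_period_dvdn px flx.
  exact/on_dcycle_exact_period.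
Qed.

End MoveCycles.

Section Linearity.

Variables (n : nat) (hn : (0 < n)%N).

Lemma zmodnE a : (zmodn hn a : nat)%:Z = (a %% n%:Z)%Z.
Proof.
rewrite /zmodn /= -modz_nat gez0_abs ?modz_mod // modz_ge0 //.
by rewrite eqz_nat -lt0n.
Qed.

Lemma eq_zmodn a b : (a = b %[mod n%:Z])%Z -> zmodn hn a = zmodn hn b.
Proof. by move=> eq_ab; apply: val_inj; rewrite /= eq_ab. Qed.

Lemma zmodn_ord (x : 'I_n) : zmodn hn (x : nat)%:Z = x.
Proof.
by apply/val_inj/eqP; rewrite /= -eqz_nat zmodnE modz_small // ltz_nat ltn_ord.
Qed.

Lemma modz_sum_mulr (I : Type) (r : seq I) (F G : I -> int) (d : int) :
  (\sum_(i <- r) F i * (G i %% d)%Z = \sum_(i <- r) F i * G i %[mod d])%Z.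
Proof.
elim: r => [|a r IHr]; first by rewrite !big_nil.
by rewrite !big_cons -modzDm IHr modzMmr modzDm.
Qed.

Lemma coprimez_invmod (s : int) :
  gcdz s n%:Z = 1%N -> exists t : int, (t * s = 1 %[mod n%:Z])%Z.
Proof.
have [u [v <-]] := Bezoutz s n%:Z => uv1; exists u.
by rewrite -[1]/(Posz 1%N) -uv1 addrC modzMDl.
Qed.

Variables (m : nat) (M : 'M[int]_m).
Local Notation step := (move hn M).

Lemma move_lincomb (s : seq (int * vertex m n)) :
  step (lincomb hn s) = lincomb hn [seq (p.1, step p.2) | p <- s].
Proof.
apply/ffunP => i; rewrite !ffunE big_map /=; apply: eq_zmodn.
under eq_bigr do rewrite /lincomb ffunE zmodnE.
under [in RHS]eq_bigr do rewrite /move ffunE zmodnE.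
rewrite modz_sum_mulr (modz_sum_mulr _ (fun p => p.1)); congr (_ %% _)%Z.
under eq_bigr do rewrite big_distrr.
rewrite exchange_big /=; apply: eq_bigr => p _; rewrite big_distrr /=.
by apply: eq_bigr => j _; rewrite mulrCA.
Qed.

Lemma iter_lincomb (s : seq (int * vertex m n)) j :
  iter j step (lincomb hn s) = lincomb hn [seq (p.1, iter j step p.2) | p <- s].
Proof.
elim: j => /= [|j ->]; first by rewrite map_id_in // => -[].
by rewrite move_lincomb -map_comp.
Qed.

Lemma scalev_lincomb (s : int) (x : vertex m n) :
  scalev hn s x = lincomb hn [:: (s, x)].
Proof. by apply/ffunP => i; rewrite !ffunE big_seq1. Qed.

Lemma move_scalev (s : int) (x : vertex m n) :
  step (scalev hn s x) = scalev hn s (step x).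
Proof. by rewrite !scalev_lincomb move_lincomb. Qed.

Lemma scalevK (s t : int) :
  (t * s = 1 %[mod n%:Z])%Z -> cancel (@scalev m n hn s) (scalev hn t).
Proof.
move=> ts1 x; apply/ffunP => i; rewrite !ffunE -[RHS]zmodn_ord; apply: eq_zmodn.
by rewrite zmodnE modzMmr mulrA -modzMml ts1 modzMml mul1r.
Qed.

End Linearity.

Theorem proposition3p2 (m n l : nat) (hm : (0 < m)%N) (hn : (0 < n)%N)
  (hl : (0 < l)%N) (M : 'M[int]_m) :
  (forall s : seq (int * vertex m n),
      (forall p, p \in s -> inS hn M l p.2) ->
      inS hn M l (lincomb hn s)) /\
  (finite_order hn M ->
   forall (x : vertex m n) (s : int),
     inS hn M l x -> gcdz s (n%:Z) = 1%N ->
     exists k : nat, on_dcycle hn M x k /\ on_dcycle hn M (scalev hn s x) k).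
Proof.
split.
- move=> s s_inS; apply/inS_iff_iter; rewrite // iter_lincomb.
  congr lincomb; rewrite -[RHS]map_id; apply/eq_in_map => -[c y] /s_inS.
  by move/inS_iff_iter => /= ->.
(* A vertex of S is already periodic. *)
- move=> _ x s /(inS_iff_iter _ _ _ hl) flx /coprimez_invmod[t ts1].
  have [p px] := exact_period_exists hl flx.
  exists p; split; apply/on_dcycle_exact_period => //.
  apply: exact_period_inj_comm px; first exact: can_inj (scalevK _ ts1).
  exact: move_scalev.
Qed.
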